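(* Let $n$ and $s$ be integers with $\gcd(s,n)=1$. If $p(x)\in\mathcal L_{n,q}$ satisfies $p(x)=\lambda\, p(x)^{[s]}$ for some $\lambda\in\mathbb F_{q^n}^*$, then $p(x)$ has rank at most one, i.e. $p\in\mathcal U_1$.
   Context: $q$ is a prime power, $[i]:=q^i$. $\mathcal L_{n,q}$ is the set of linearized polynomials $f(x)=\sum_{i=0}^{n-1}a_ix^{[i]}$ with $a_i\in\mathbb F_{q^n}$, identified with the $\mathbb F_q$-linear maps of $\mathbb F_{q^n}$ they induce; the rank of $f$ is the $\mathbb F_q$-dimension of its image. For $f(x)=\sum_i a_ix^{[i]}$, $f(x)^{[s]}$ denotes $x^{[s]}\circ f(x)=\sum_{i=0}^{n-1}a_i^{[s]}x^{[(i+s)\bmod n]}$. $\mathcal U_1$ denotes the set of elements of $\mathcal L_{n,q}$ of rank at most one. *)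

From HB Require Import structures.
From mathcomp Require Import all_boot all_order all_algebra all_field.
Set Implicit Arguments. Unset Strict Implicit. Unset Printing Implicit Defensive.
Import GRing.Theory.
Local Open Scope ring_scope.

(* Setting: F = F_q (a finite field, q = #|F|), L = F_{q^n} a field extension
   of F of dimension n.  A linearized polynomial in L_{n,q} is given by its
   coefficient vector a : {ffun 'I_n -> L}, f(x) = \sum_i a_i x^[i].       *)

Section LinPoly.
Variables (F : finFieldType) (L : fieldExtType F).

Definition qpow (i : nat) (x : L) : L := x ^+ (#|F| ^ i).

Definition lpeval (n : nat) (a : {ffun 'I_n -> L}) (x : L) : L :=
  \sum_(i < n) a i * qpow i x.

Definition lprank (n : nat) (a : {ffun 'I_n -> L}) : nat :=
  \dim (limg (linfun (lpeval a))).

Definition smod (n : nat) (s : int) : nat := absz (s %% n%:Z)%Z.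

(* index i with (i + s) mod n = j, i.e. i = (j - s) mod n *)
Definition shift_src (n : nat) (s : int) (j : 'I_n) : 'I_n :=
  Ordinal (ltn_pmod (j + (n - smod n s)) (leq_ltn_trans (leq0n j) (ltn_ord j))).

(* f(x)^[s] = x^[s] o f(x) = \sum_i a_i^[s] x^[(i+s) mod n] *)
Definition lpfrob (n : nat) (s : int) (a : {ffun 'I_n -> L}) : {ffun 'I_n -> L} :=
  [ffun j => qpow (smod n s) (a (shift_src s j))].

End LinPoly.

From HB Require Import structures.
From mathcomp Require Import all_boot all_order all_algebra all_field.
Set Implicit Arguments.
Unset Strict Implicit.
Import GRing.Theory.
Local Open Scope ring_scope.

(* Evaluating p^[s] is composing p with the F_q-linear ring morphism
   x |-> x^[s'], s' = s mod n, so this morphism acts on the image V of p as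
   multiplication by lam^-1.  Hence for y, y1 in V with y1 <> 0 the ratio y/y1
   is fixed by x |-> x^[s'], and since gcd(s', n) = 1 it is then fixed by the
   Frobenius x |-> x^q as well, i.e. y/y1 lies in F_q: V is the line F_q y1. *)

Section QPow.
Variables (F : finFieldType) (L : fieldExtType F).
Local Notation n := (\dim {:L}).

Lemma pchar_nat_card : [pchar L].-nat #|F|.
Proof.
have [p p_pr pcharFp] := finPcharP F.
have pcharLp : p \in [pchar L] by rewrite pchar_lalg.
by rewrite (card_pprimeChar pcharFp) (eq_pnat _ (pcharf_eq pcharLp)) pnatX pnat_id.
Qed.

Lemma qpow_is_zmod_morphism i : zmod_morphism (@qpow F L i).
Proof.
have q_pchar : [pchar L].-nat (#|F| ^ i)%N by rewrite pnatX pchar_nat_card.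
by move=> x y; rewrite /qpow exprDn_pchar ?exprNn_pchar.
Qed.

Lemma qpow_is_monoid_morphism i : monoid_morphism (@qpow F L i).
Proof. by split=> [|x y]; rewrite /qpow ?expr1n ?exprMn. Qed.

HB.instance Definition _ i :=
  GRing.isZmodMorphism.Build L L (qpow i) (qpow_is_zmod_morphism i).
HB.instance Definition _ i :=
  GRing.isMonoidMorphism.Build L L (qpow i) (qpow_is_monoid_morphism i).

Lemma qpowD i j (x : L) : qpow (i + j) x = qpow i (qpow j x).
Proof. by rewrite /qpow expnD mulnC exprM. Qed.

Lemma qpow_mul_fixed k i (x : L) : qpow i x = x -> qpow (k * i) x = x.
Proof.
move=> fix_x; elim: k => [|k IHk]; first by rewrite /qpow expn0 expr1.
by rewrite mulSn qpowD IHk fix_x.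
Qed.

Lemma qpow1_fixedE (x : L) : (qpow 1 x == x) = (x \in 1%VS).
Proof. by rewrite (Fermat's_little_theorem 1%AS) dimv1. Qed.

Lemma qpow_dim (x : L) : qpow n x = x.
Proof. by apply/eqP; rewrite /qpow -(Fermat's_little_theorem {:L}%AS) memvf. Qed.

Lemma qpow_eq_mod i j (x : L) : i = j %[mod n] -> qpow i x = qpow j x.
Proof.
suff qpow_modn k : qpow k x = qpow (k %% n) x.
  by move=> eq_ij; rewrite qpow_modn eq_ij -qpow_modn.
by rewrite {1}(divn_eq k n) qpowD qpow_mul_fixed ?qpow_dim.
Qed.

Lemma qpow_id_mem1 i (x : L) : x \in 1%VS -> qpow i x = x.
Proof. by rewrite -qpow1_fixedE => /eqP fix_x; rewrite -[i]muln1 qpow_mul_fixed. Qed.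

Lemma qpowZ i (c : F) (x : L) : qpow i (c *: x) = c *: qpow i x.
Proof.
have c1 : c%:A \in (1%VS : {vspace L}) by rewrite rpredZ ?mem1v.
by rewrite -[c *: x]mulr_algl rmorphM /= (qpow_id_mem1 i c1) mulr_algl.
Qed.

Lemma qpow_fixed_coprime s (z : L) : coprime s n -> qpow s z = z -> z \in 1%VS.
Proof.
move=> cop_sn fix_z; rewrite -qpow1_fixedE; apply/eqP.
have [km kn Ekm _] := egcdnP s (adim_gt0 {:L}%AS).
rewrite gcdnC (eqP cop_sn) addnC in Ekm.
(* Bezout: [1 + kn s = km n], and both [kn s] and [km n] fix [z]. *)
by rewrite -{1}(qpow_mul_fixed kn fix_z) -qpowD -Ekm qpow_mul_fixed ?qpow_dim.
Qed.

Lemma dimv_qpow_eigen_le1 s (mu : L) (V : {vspace L}) :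
  coprime s n -> {in V, forall y, qpow s y = mu * y} -> (\dim V <= 1)%N.
Proof.
move=> cop_sn eigV.
have [-> | nzV] := eqVneq V 0%VS; first by rewrite dimv0.
set y1 := vpick V; have y1V : y1 \in V := memv_pick V.
have y1_neq0 : y1 != 0 by rewrite vpick0.
have mu_neq0 : mu != 0.
  apply: contra_neq y1_neq0 => mu0.
  by apply/eqP; rewrite -(fmorph_eq0 (qpow s)) /= eigV // mu0 mul0r.
suff /dimvS : (V <= <[y1]>)%VS by rewrite dim_vline y1_neq0.
apply/subvP => y yV; have /vlineP[c yy1] : y / y1 \in 1%VS.
  apply: (qpow_fixed_coprime cop_sn).
  by rewrite fmorph_div /= !eigV // invfM mulrACA mulfV // mul1r.
by apply/vlineP; exists c; rewrite -mulr_algl -yy1 mulfVK.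
Qed.

End QPow.

Section ShiftSrc.
Variables (n : nat) (s : int).

Lemma smod_ltn : (0 < n)%N -> (smod n s < n)%N.
Proof.
move=> n_gt0; have n_neq0 : n%:Z != 0 by rewrite eqz_nat -lt0n.
by rewrite -ltz_nat /smod gez0_abs ?modz_ge0 ?ltz_pmod.
Qed.

Lemma shift_src_inj : injective (@shift_src n s).
Proof.
move=> j1 j2 /(congr1 val) /= /eqP; rewrite eqn_modDr => /eqP.
by rewrite !modn_small // => /val_inj.
Qed.

Lemma shift_srcE (j : 'I_n) : smod n s + shift_src s j = j %[mod n].
Proof.
have smod_le : (smod n s <= n)%N by rewrite ltnW ?smod_ltn ?(leq_ltn_trans _ (ltn_ord j)).
by rewrite /= modnDmr addnCA subnKC // addnC modnDl.
Qed.

End ShiftSrc.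

Section LinPolyEval.
Variables (F : finFieldType) (L : fieldExtType F) (n : nat).

Lemma lpeval_is_linear (a : {ffun 'I_n -> L}) : linear (lpeval a).
Proof.
move=> c x y; rewrite /lpeval scaler_sumr -big_split /=; apply: eq_bigr => i _.
by rewrite rmorphD /= qpowZ mulrDr scalerAr.
Qed.

HB.instance Definition _ a :=
  GRing.isLinear.Build F L L *:%R (lpeval a) (lpeval_is_linear a).

Lemma lpeval_scale (lam : L) (a : {ffun 'I_n -> L}) x :
  lpeval [ffun i => lam * a i] x = lam * lpeval a x.
Proof. by rewrite /lpeval mulr_sumr; apply: eq_bigr => i _; rewrite ffunE mulrA. Qed.

Lemma lpeval_lpfrob s (a : {ffun 'I_n -> L}) x : \dim {:L} = n ->
  lpeval (lpfrob s a) x = qpow (smod n s) (lpeval a x).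
Proof.
move=> dimL; rewrite /lpeval rmorph_sum [RHS](reindex_inj (@shift_src_inj n s)) /=.
apply: eq_bigr => j _; rewrite ffunE rmorphM /= -qpowD; congr (_ * _).
by apply: qpow_eq_mod; rewrite dimL shift_srcE.
Qed.

End LinPolyEval.

Theorem lemma3p3 (F : finFieldType) (L : fieldExtType F) (n : nat) (s : int)
  (hn : \dim {:L} = n) (hcop : coprimez s n%:Z)
  (p : {ffun 'I_n -> L}) (lam : L) (hlam : lam != 0)
  (hp : p = [ffun i => lam * lpfrob s p i]) :
  (lprank p <= 1)%N.
Proof.
have cop : coprime (smod n s) (\dim {:L}) by rewrite hn; rewrite /coprimez -gcdz_modl in hcop.
rewrite /lprank; apply: (dimv_qpow_eigen_le1 (mu := lam^-1) cop) => _ /memv_imgP[x _ ->].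
by rewrite lfunE /= [in RHS]hp lpeval_scale lpeval_lpfrob // mulKf.
Qed.
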